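(* Assume (H1)–(H5) and $\mathbb A_n=\mathbb T_n$. Then $\lim_{n\to\infty}\mathbb E[R_0(n)^2]=0$.
   Context: Let $d\ge1$, $S=\mathbb R^d$ with Borel $\sigma$-field. Binary tree: $\mathbb G_0=\mathbb T_0=\{\emptyset\}$, $\mathbb G_k=\{0,1\}^k$ (so $|\mathbb G_k|=2^k$), $\mathbb T_k=\bigcup_{r\le k}\mathbb G_r$, $\mathbb T=\bigcup_{r\ge0}\mathbb G_r$; $ij$ is the concatenation of words $i,j$ and $iA=\{ij:j\in A\}$. Given a probability kernel $\mathcal P$ from $S$ to $S^2$, for $g:S^3\to\mathbb R$ set $\mathcal Pg(y)=\int g(y,y_0,y_1)\mathcal P(y,dy_0,dy_1)$ and for $h:S^2\to\mathbb R$ set $\mathcal Ph(y)=\int h(y_0,y_1)\mathcal P(y,dy_0,dy_1)$. A bifurcating Markov chain (BMC) with initial law $\nu$ and kernel $\mathcal P$ is a process $X=(X_i)_{i\in\mathbb T}$ with values in $S$ such that $X_\emptyset\sim\nu$ and for all $k\ge0$ and bounded measurable $g_i:S^3\to\mathbb R$, $\mathbb E[\prod_{i\in\mathbb G_k}g_i(X_i,X_{i0},X_{i1})\mid\sigma(X_j;j\in\mathbb T_k)]=\prod_{i\in\mathbb G_k}\mathcal Pg_i(X_i)$. Let $P_0(y,A)=\mathcal P(y,A\times S)$, $P_1(y,A)=\mathcal P(y,S\times A)$, $\mathcal Q=\frac12(P_0+P_1)$, $\mathcal Q^n$ its $n$-th iterate, $\langle\lambda,f\rangle=\int f\,d\lambda$.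 For finite $A\subset\mathbb T$ and $f:S^3\to\mathbb R$, $M_A(f)=\sum_{u\in A}f(X_u,X_{u0},X_{u1})$. $X$ is a BMC with kernel $\mathcal P$ and initial law $\nu$ satisfying: (H1) There is a set $F$ of real measurable functions on $S$ which is a vector space containing the constants, with $f^2\in F$ for $f\in F$, $F\subset L^1(\nu)$, and for $f_0,f_1\in F$, $f_0\otimes f_1$ is $\mathcal P(y,\cdot)$-integrable for every $y$ and $\mathcal P(f_0\otimes f_1)\in F$. (H2) There is a probability measure $\mu$ on $S$ with $F\subset L^1(\mu)$ such that for every $f\in F$, $\mathcal Q^nf\to\langle\mu,f\rangle$ pointwise and there is $g\in F$ with $|\mathcal Q^nf|\le g$ for all $n$; moreover there exist $V\in F$ with $V\ge1$, $\alpha\in(0,1)$ and $M<\infty$ such that $|\mathcal Q^nf-\langle\mu,f\rangle|\le M\alpha^nV$ for all $n\in\mathbb N$ and all measurable $f$ with $|f|\le V$. (H3) $\mathcal P(y,dy_0,dy_1)$ has a Lebesgue density $\mathcal P(y,y_0,y_1)$; then $\mathcal Q$ has density $\mathcal Q(y,z)=\frac12\int(\mathcal P(y,z,w)+\mathcal P(y,w,z))dw$, $\mu$ has a Lebesgue density denoted $\mu(\cdot)$, and $\mu^{\triangle}(y,y_0,y_1)=\mu(y)\mathcal P(y,y_0,y_1)$. (H4) $C_0=\sup_{y,y_0,y_1\in S}(\mu(y)+\mathcal Q(y,y_0)+\mathcal P(y,y_0,y_1))<\infty$. (H5) $h_n=2^{-n\gamma}$ for some $\gamma\in(0,1/(3d))$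 with $2\alpha^2<2^{3d\gamma}$; $K_0:\mathbb R^d\to\mathbb R$ is bounded, integrable (hence square integrable) with $\int K_0=1$. Let $K=K_0\otimes K_0\otimes K_0$ on $\mathbb R^{3d}$. Fix $(x,x_0,x_1)\in S^3$ with $\mu(x)>0$. Define $f_n(y,y_0,y_1)=h_n^{-3d/2}K(h_n^{-1}(x-y),h_n^{-1}(x_0-y_0),h_n^{-1}(x_1-y_1))$ and $\tilde f_n=f_n-\langle\mu,\mathcal Pf_n\rangle$. Let $(p_n)$ be a non-decreasing sequence of positive integers with $p_n<n$, $p_n/n\to1$, and $n-p_n-\lambda\log n\to+\infty$ for every $\lambda>0$; write $p=p_n$. Define $R_0(n)=|\mathbb G_n|^{-1/2}\sum_{k=0}^{n-p-1}M_{\mathbb G_k}(\tilde f_n)$. *)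

From HB Require Import structures.
From mathcomp Require Import all_boot all_order all_algebra.
From mathcomp Require Import all_classical all_reals all_analysis.
Set Implicit Arguments. Unset Strict Implicit. Unset Printing Implicit Defensive.
Import Order.TTheory GRing.Theory Num.Theory.
Import numFieldNormedType.Exports.
Local Open Scope classical_set_scope.
Local Open Scope ring_scope.

(* State space S = R^d is represented by d.-tuple R, with the library's
   product (= Borel) sigma-algebra on tuples. *)

(* Used only for
   nonnegative measurable integrands, where (Tonelli) it is the Lebesgue
   integral on R^n. *)
Fixpoint ileb (R : realType) (n : nat) : (n.-tuple R -> \bar R) -> \bar R :=
  match n return (n.-tuple R -> \bar R) -> \bar R with
  | 0 => fun f => f [tuple]
  | n'.+1 => fun f =>
      (\int[@lebesgue_measure R]_x ileb (fun t : n'.-tuple R => f (cons_tuple x t)))%E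
  end.

Definition ileb2 (R : realType) (d : nat) (f : d.-tuple R -> d.-tuple R -> \bar R) : \bar R :=
  ileb (fun y0 => ileb (fun y1 => f y0 y1)).

(* Binary tree: a node is a word in {0,1}^* (false = 0, true = 1);
   the children of u are u0 = rcons u false and u1 = rcons u true.
   G_k = {0,1}^k is enumerated as k.-tuple bool. *)

Definition Tgen d0 (Om : measurableType d0) dS (S : measurableType dS)
  (X : seq bool -> Om -> S) (k : nat) : set (set Om) :=
  [set B | exists j : seq bool, (size j <= k)%N /\
           exists C : set S, measurable C /\ B = X j @^-1` C].

Definition Pcal (R : realType) dS (S : measurableType dS)
  (P : R.-pker S ~> (S * S)%type) (g : S * (S * S) -> R) (y : S) : R :=
  Rintegral (P y) setT (fun z => g (y, z)).

Definition Pcal2 (R : realType) dS (S : measurableType dS)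
  (P : R.-pker S ~> (S * S)%type) (h : S * S -> R) (y : S) : R :=
  Rintegral (P y) setT h.

Definition is_BMC (R : realType) d0 (Om : measurableType d0) (Pr : probability Om R)
  dS (S : measurableType dS) (X : seq bool -> Om -> S) (nu : probability S R)
  (P : R.-pker S ~> (S * S)%type) : Prop :=
  (forall u, measurable_fun setT (X u)) /\
  (forall A, measurable A -> Pr (X [::] @^-1` A) = nu A) /\
  (forall (k : nat) (g : k.-tuple bool -> S * (S * S) -> R),
     (forall i, measurable_fun setT (g i)) ->
     (forall i, exists c : R, forall z, `|g i z| <= c) ->
     forall A : set Om, <<s Tgen X k >> A ->
     (\int[Pr]_w ((\1_A w) *
        \prod_(i : k.-tuple bool) g i (X i w, (X (rcons i false) w, X (rcons i true) w)))%:E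
      = \int[Pr]_w ((\1_A w) * \prod_(i : k.-tuple bool) Pcal P (g i) (X i w))%:E)%E).

Definition Qop (R : realType) dS (S : measurableType dS)
  (P : R.-pker S ~> (S * S)%type) (f : S -> R) (y : S) : R :=
  (Rintegral (P y) setT (fun z => f z.1) + Rintegral (P y) setT (fun z => f z.2)) / 2.

Definition Qn (R : realType) dS (S : measurableType dS)
  (P : R.-pker S ~> (S * S)%type) (n : nat) (f : S -> R) : S -> R :=
  iter n (Qop P) f.

Definition pairing (R : realType) dS (S : measurableType dS)
  (lam : {measure set S -> \bar R}) (f : S -> R) : R := Rintegral lam setT f.

Definition MG (R : realType) d0 (Om : measurableType d0) dS (S : measurableType dS)
  (X : seq bool -> Om -> S) (k : nat) (f : S * (S * S) -> R) (w : Om) : R :=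
  \sum_(u : k.-tuple bool) f (X u w, (X (rcons u false) w, X (rcons u true) w)).

Definition kscale (R : realType) (d : nat) (h : R) (a b : d.-tuple R) : d.-tuple R :=
  [tuple (tnth a i - tnth b i) / h | i < d].

Definition hn (R : realType) (gamma : R) (n : nat) : R := 2 `^ (- (n%:R * gamma)).

Definition fn (R : realType) (d : nat) (K0 : d.-tuple R -> R) (gamma : R)
  (x x0 x1 : d.-tuple R) (n : nat) (z : d.-tuple R * (d.-tuple R * d.-tuple R)) : R :=
  hn gamma n `^ (- ((3 * d)%:R / 2)) *
  (K0 (kscale (hn gamma n) x z.1) * K0 (kscale (hn gamma n) x0 z.2.1)
   * K0 (kscale (hn gamma n) x1 z.2.2)).

Definition ftilde (R : realType) (d : nat) (P : R.-pker (d.-tuple R) ~> (d.-tuple R * d.-tuple R)%type)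
  (mu : probability (d.-tuple R) R) (K0 : d.-tuple R -> R) (gamma : R)
  (x x0 x1 : d.-tuple R) (n : nat) (z : d.-tuple R * (d.-tuple R * d.-tuple R)) : R :=
  fn K0 gamma x x0 x1 n z - pairing mu (Pcal P (fn K0 gamma x x0 x1 n)).

Definition R0 (R : realType) d0 (Om : measurableType d0) (d : nat)
  (X : seq bool -> Om -> d.-tuple R)
  (P : R.-pker (d.-tuple R) ~> (d.-tuple R * d.-tuple R)%type)
  (mu : probability (d.-tuple R) R) (K0 : d.-tuple R -> R) (gamma : R)
  (x x0 x1 : d.-tuple R) (p : nat -> nat) (n : nat) (w : Om) : R :=
  ((2 ^ n)%:R `^ (- (2^-1))) *
  \sum_(0 <= k < n - p n) MG X k (ftilde P mu K0 gamma x x0 x1 n) w.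

From HB Require Import structures.
From mathcomp Require Import all_boot all_order all_algebra.
From mathcomp Require Import all_classical all_reals all_analysis.
From mathcomp Require Import ring lra zify.
Set Implicit Arguments. Unset Strict Implicit. Unset Printing Implicit Defensive.
Import Order.TTheory GRing.Theory Num.Theory.
Import numFieldNormedType.Exports.
Local Open Scope classical_set_scope.
Local Open Scope ring_scope.

(* Since K0 is bounded by c, the
   kernel f_n is bounded by h_n^{-3d/2} c^3 and its centred version by twice
   that; M_{G_k} sums 2^k such terms, and the k-sum has at most 2^{n-p_n}
   terms in total.  Hence, pointwise on the probability space,
     |R_0(n)| <= 2 c^3 2^{-n/2} 2^{n-p_n} h_n^{-3d/2}
             = 2 c^3 2^{-n(1 - 3d gamma)/2 + (n - p_n)}.
   As 3 d gamma < 1 and (n - p_n)/n -> 0, the exponent is eventually below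
   -eps n for some eps > 0, so this bound tends to 0, and so does the
   second moment E[R_0(n)^2], which is dominated by its square.  Only the
   boundedness of K0, gamma < 1/(3d) and p_n / n -> 1 enter the argument. *)

Section bounded_integrals.
Context d (T : measurableType d) (R : realType).
Variable mu : {measure set T -> \bar R}.
Local Open Scope ereal_scope.

(* A nonnegative function bounded by b has integral at most b * mu(T); the
   bound is read off the simple functions below f, so f need not be
   measurable. *)
Lemma ge0_integral_le_cst (f : T -> \bar R) (b : R) :
  (0 <= b)%R -> (forall x, 0 <= f x) -> (forall x, f x <= b%:E) ->
  \int[mu]_x f x <= b%:E * mu setT.
Proof.
move=> b0 f0 fb; rewrite -(integral_cst mu measurableT b%:E).
rewrite /integral !patch_setT.
rewrite (_ : f^\- = cst 0); last first.
  by apply/funext => x; rewrite (ge0_funenegE (D:=setT)) ?inE.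
rewrite (_ : (cst b%:E)^\- = cst 0); last first.
  by apply/funext => x; rewrite (ge0_funenegE (D:=setT)) ?inE.
apply: leeB => //; apply: ereal_sup_le => _ [h hf <-]; exists h => //= x.
apply: (le_trans (hf x)).
by rewrite !(ge0_funeposE (D:=setT)) ?inE.
Qed.

(* The real integral against a probability of a function bounded by C in
   absolute value is bounded by C: both halves of the Jordan decomposition
   have integral in [0, C]. *)
Lemma norm_Rintegral_le (g : T -> R) (C : R) :
  mu setT = 1 -> (forall x, `|g x| <= C)%R -> (`|Rintegral mu setT g| <= C)%R.
Proof.
move=> mu1 gC.
have [x0 _] : exists x : T, True.
  apply: contrapT => noT; move: mu1.
  rewrite (_ : setT = set0); last by apply/seteqP; split=> // x _; apply: noT; exists x.
  by rewrite measure0 => -[] /eqP; rewrite eq_sym oner_eq0.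
have C0 : (0 <= C)%R := le_trans (normr_ge0 _) (gC x0).
have part_bound (h : T -> \bar R) : (forall x, 0 <= h x) ->
    (forall x, h x <= `|g x|%:E) -> 0 <= \int[mu]_x h x <= C%:E.
  move=> h0 hg; apply/andP; split; first exact: integral_ge0.
  rewrite -[C%:E]mule1 -mu1 ge0_integral_le_cst // => x.
  by rewrite (le_trans (hg x)) // lee_fin.
have pos_le x : (EFin \o g)^\+ x <= `|g x|%:E.
  by rewrite funeposE ge_max !lee_fin ler_norm normr_ge0.
have neg_le x : (EFin \o g)^\- x <= `|g x|%:E.
  by rewrite funenegE ge_max !lee_fin normr_ge0 -normrN ler_norm.
have /andP[a0 aC] := part_bound _ (funepos_ge0 _) pos_le.
have /andP[b0 bC] := part_bound _ (funeneg_ge0 _) neg_le.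
rewrite /Rintegral integralE.
set a := \int[mu]_x _ in a0 aC *; set b := \int[mu]_x _ in b0 bC *.
have [ra ea] : exists r, a = r%:E.
  by exists (fine a); rewrite fineK // ge0_fin_numE // (le_lt_trans aC) ?ltry.
have [rb eb] : exists r, b = r%:E.
  by exists (fine b); rewrite fineK // ge0_fin_numE // (le_lt_trans bC) ?ltry.
move: a0 aC b0 bC; rewrite ea eb !lee_fin /= ler_norml => *; apply/andP; split; lra.
Qed.

End bounded_integrals.

Lemma sum_pow2_le (N : nat) : (\sum_(0 <= k < N) 2 ^ k <= 2 ^ N)%N.
Proof.
elim: N => [|N IH]; first by rewrite big_geq.
by rewrite big_nat_recr //= expnS; lia.
Qed.

Lemma norm_MG_le (R : realType) d0 (Om : measurableType d0)
  dS (S : measurableType dS) (X : seq bool -> Om -> S) (k : nat)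
  (f : S * (S * S) -> R) (w : Om) (B : R) :
  (forall z, `|f z| <= B) -> `|MG X k f w| <= (2 ^ k)%:R * B.
Proof.
move=> fB; rewrite /MG (le_trans (ler_norm_sum _ _ _)) //.
rewrite (le_trans (ler_sum _ (fun i _ => fB _))) //.
by rewrite sumr_const card_tuple card_bool mulr_natl.
Qed.

Lemma norm_sum_generations_le (R : realType) (G : nat -> R) (N : nat) (B : R) :
  0 <= B -> (forall k, `|G k| <= (2 ^ k)%:R * B) ->
  `|\sum_(0 <= k < N) G k| <= (2 ^ N)%:R * B.
Proof.
move=> B0 GB; rewrite (le_trans (ler_norm_sum _ _ _)) //.
rewrite (le_trans (ler_sum _ (fun k _ => GB k))) //.
by rewrite -mulr_suml -natr_sum ler_wpM2r // ler_nat sum_pow2_le.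
Qed.

Section kernel_bounds.
Context (R : realType) (d : nat).
Variables (K0 : d.-tuple R -> R) (c gamma : R) (x x0 x1 : d.-tuple R).
Hypothesis K0_le : forall u, `|K0 u| <= c.

Definition kernel_scale (n : nat) : R := hn gamma n `^ (- ((3 * d)%:R / 2)).

Lemma norm_fn_le (n : nat) z : `|fn K0 gamma x x0 x1 n z| <= kernel_scale n * c ^+ 3.
Proof.
rewrite /fn normrM ger0_norm ?powR_ge0 // ler_wpM2l ?powR_ge0 //.
by rewrite !normrM -mulrA exprS expr2 ler_pM ?mulr_ge0 ?ler_pM.
Qed.

(* Centring by the mean <mu, P f_n> at most doubles the bound, as mu and
   every P(y, .) are probabilities. *)
Lemma norm_ftilde_le (P : R.-pker (d.-tuple R) ~> (d.-tuple R * d.-tuple R)%type)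
  (mu : probability (d.-tuple R) R) (n : nat) z :
  `|ftilde P mu K0 gamma x x0 x1 n z| <= 2 * (kernel_scale n * c ^+ 3).
Proof.
rewrite /ftilde (le_trans (ler_normB _ _)) // mulr_natl mulr2n.
rewrite lerD ?norm_fn_le //.
apply: norm_Rintegral_le; first exact: probability_setT.
move=> y; apply: norm_Rintegral_le; first exact: prob_kernel.
by move=> w; exact: norm_fn_le.
Qed.

End kernel_bounds.

Definition R0_rate (R : realType) (d : nat) (gamma : R) (p : nat -> nat)
  (n : nat) : R :=
  (2 ^ n)%:R `^ (- (2^-1)) * (2 ^ (n - p n))%:R * kernel_scale d gamma n.

Lemma norm_R0_le (R : realType) d0 (Om : measurableType d0) (d : nat)
  (X : seq bool -> Om -> d.-tuple R)
  (P : R.-pker (d.-tuple R) ~> (d.-tuple R * d.-tuple R)%type)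
  (mu : probability (d.-tuple R) R) (K0 : d.-tuple R -> R) (c gamma : R)
  (x x0 x1 : d.-tuple R) (p : nat -> nat) (n : nat) (w : Om) :
  (forall u, `|K0 u| <= c) ->
  `|R0 X P mu K0 gamma x x0 x1 p n w| <= 2 * c ^+ 3 * R0_rate d gamma p n.
Proof.
move=> K0_le; have c0 : 0 <= c := le_trans (normr_ge0 _) (K0_le x).
rewrite /R0 normrM ger0_norm ?powR_ge0 //.
have -> : 2 * c ^+ 3 * R0_rate d gamma p n = (2 ^ n)%:R `^ (- (2^-1)) *
    ((2 ^ (n - p n))%:R * (2 * (kernel_scale d gamma n * c ^+ 3))).
  by rewrite /R0_rate; ring.
rewrite ler_wpM2l ?powR_ge0 // norm_sum_generations_le //.
  by rewrite !mulr_ge0 ?powR_ge0 ?exprn_ge0.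
by move=> k; rewrite norm_MG_le // => z; exact: norm_ftilde_le.
Qed.

Lemma gap_sublinear (R : realType) (p : nat -> nat) (eps : R) :
  (fun n => (p n)%:R / n%:R : R) @ \oo --> (1 : R) -> 0 < eps ->
  \forall n \near \oo, (n - p n)%:R < eps * n%:R.
Proof.
move=> p_cvg eps0.
have close : \forall n \near \oo, `|1 - (p n)%:R / n%:R : R| < eps.
  by move/cvgrPdist_lt : p_cvg; apply.
near=> n.
have n0 : (0 : R) < n%:R by rewrite ltr0n; near: n; exact: nbhs_infty_gt.
have [pn_le|pn_gt] := leqP (p n) n; last first.
  by rewrite (eqP (ltnW pn_gt : (n - p n == 0)%N)) mulr_gt0.
have -> : (n - p n)%:R = (1 - (p n)%:R / n%:R) * n%:R :> R.
  by rewrite natrB // mulrBl mul1r divfK // lt0r_neq0.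
rewrite ltr_pM2r //.
have : `|1 - (p n)%:R / n%:R : R| < eps by near: n; exact: close.
by rewrite ltr_norml => /andP[].
Unshelve. all: by end_near.
Qed.

(* A power 2^{e_n} whose exponent eventually decays at least linearly tends
   to 0, being squeezed by the geometric sequence (2^{-eps})^n. *)
Lemma powR2_cvg0 (R : realType) (e : nat -> R) (eps : R) : 0 < eps ->
  (\forall n \near \oo, e n <= - (eps * n%:R)) -> (2 : R) `^ e n @[n --> \oo] --> 0.
Proof.
move=> eps0 e_le; set r : R := 2 `^ (- eps).
have r0 : 0 <= r by exact: powR_ge0.
have r1 : r < 1.
  rewrite lt_neqAle powR_eq1 negb_or negb_or oppr_eq0 (gt_eqF eps0) /=.
  rewrite -[leRHS](powRr0 2) ler_powR ?oppr_le0 ?ltW //; last by lra.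
  by rewrite andbT; apply/and3P; split => //; lra.
apply: (@squeeze_cvgr _ _ _ _ (cst 0) (fun n => r ^+ n)); last 2 first.
- exact: cvg_cst.
- by apply: cvg_expr; rewrite ger0_norm.
near=> n; rewrite powR_ge0 /= /r -powR_mulrn ?powR_ge0 // -powRrM.
by rewrite ler_powR ?mulNr //; [lra | near: n].
Unshelve. all: by end_near.
Qed.

Lemma R0_rate_powR (R : realType) (d : nat) (gamma : R) (p : nat -> nat) n :
  R0_rate d gamma p n =
  2 `^ (- (n%:R / 2) + (n - p n)%:R + n%:R * ((3 * d)%:R * gamma) / 2).
Proof.
have two0 : (2 : R) != 0 by rewrite pnatr_eq0.
rewrite powRD ?two0 ?implybT // powRD ?two0 ?implybT //.
rewrite /R0_rate /kernel_scale /hn -powRrM !natrX !powR_mulrn //.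
rewrite -!powR_mulrn // -!powRrM; congr (_ `^ _ * _ * _ `^ _); ring.
Qed.

Lemma R0_rate_cvg0 (R : realType) (d : nat) (gamma : R) (p : nat -> nat) :
  (1 <= d)%N -> 0 < gamma < ((3 * d)%:R)^-1 ->
  (fun n => (p n)%:R / n%:R : R) @ \oo --> (1 : R) ->
  R0_rate d gamma p n @[n --> \oo] --> 0.
Proof.
move=> d1 /andP[gamma0 gamma_lt] p_cvg.
have d3 : (0 : R) < (3 * d)%:R by rewrite ltr0n; lia.
set a := (3 * d)%:R * gamma.
have a1 : a < 1 by rewrite -(divff (lt0r_neq0 d3)) ltr_pM2l.
pose eps := (1 - a) / 4.
have eps0 : 0 < eps by rewrite divr_gt0 // subr_gt0.
rewrite (funext (R0_rate_powR d gamma p)).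
apply: (powR2_cvg0 eps0); near=> n.
have gap : (n - p n)%:R < eps * n%:R by near: n; exact: gap_sublinear.
rewrite -/a /eps in gap *; nra.
Unshelve. all: by end_near.
Qed.

Lemma second_moment_cvg0 (R : realType) d0 (Om : measurableType d0)
  (Pr : probability Om R) (Y : nat -> Om -> R) (v : nat -> R) :
  (forall n w, `|Y n w| <= v n) -> v n @[n --> \oo] --> 0 ->
  (\int[Pr]_w (Y n w ^+ 2)%:E)%E @[n --> \oo] --> 0%E.
Proof.
move=> Yv v_cvg.
have sq_le n w : Y n w ^+ 2 <= v n ^+ 2.
  by rewrite -real_normK ?num_real // lerXn2r ?nnegrE ?(le_trans _ (Yv n w)).
have v2_cvg : v n ^+ 2 @[n --> \oo] --> 0.
  by under eq_fun do rewrite expr2; rewrite -(mulr0 0); exact: cvgM.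
apply: (@squeeze_cvge _ _ _ _ (cst 0%E) _ (fun n => (v n ^+ 2)%:E)).
- apply: nearW => n; rewrite integral_ge0 => [|w _]; last by rewrite lee_fin sqr_ge0.
  rewrite -[X in (_ <= X)%E]mule1 -(probability_setT Pr).
  by rewrite ge0_integral_le_cst ?sqr_ge0 // => w; rewrite lee_fin ?sqr_ge0.
- exact: cvg_cst.
- by apply: cvg_EFin v2_cvg; exact: nearW.
Qed.

Theorem lemma6p1 (R : realType) (d : nat)
  (d0 : measure_display) (Om : measurableType d0) (Pr : probability Om R)
  (nu : probability (d.-tuple R) R)
  (P : R.-pker (d.-tuple R) ~> (d.-tuple R * d.-tuple R)%type)
  (X : seq bool -> Om -> d.-tuple R)
  (F : set (d.-tuple R -> R)) (mu : probability (d.-tuple R) R)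
  (V : d.-tuple R -> R) (alpha M : R)
  (pdens : d.-tuple R -> d.-tuple R -> d.-tuple R -> R) (mdens : d.-tuple R -> R)
  (gamma : R) (K0 : d.-tuple R -> R) (x x0 x1 : d.-tuple R) (p : nat -> nat) :
  (1 <= d)%N ->
  (* X is a BMC with initial law nu and kernel P *)
  is_BMC Pr X nu P ->
  (* (H1) *)
  (forall f, F f -> measurable_fun setT f) ->
  (forall c : R, F (fun=> c)) ->
  (forall f g, F f -> F g -> F (fun y => f y + g y)) ->
  (forall (a : R) f, F f -> F (fun y => a * f y)) ->
  (forall f, F f -> F (fun y => f y ^+ 2)) ->
  (forall f, F f -> nu.-integrable setT (EFin \o f)) ->
  (forall f0 f1, F f0 -> F f1 -> forall y,
     (P y).-integrable setT (fun z => (f0 z.1 * f1 z.2)%:E)) ->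
  (forall f0 f1, F f0 -> F f1 -> F (Pcal2 P (fun z => f0 z.1 * f1 z.2))) ->
  (* (H2) *)
  (forall f, F f -> mu.-integrable setT (EFin \o f)) ->
  (forall f, F f -> forall y, (fun n => Qn P n f y) @ \oo --> pairing mu f) ->
  (forall f, F f -> exists2 g, F g & forall n y, `|Qn P n f y| <= g y) ->
  F V -> (forall y, 1 <= V y) -> 0 < alpha < 1 ->
  (forall f : d.-tuple R -> R, measurable_fun setT f -> (forall y, `|f y| <= V y) ->
     forall n y, `|Qn P n f y - pairing mu f| <= M * alpha ^+ n * V y) ->
  (* (H3) *)
  measurable_fun setT
    (fun t : d.-tuple R * (d.-tuple R * d.-tuple R) => pdens t.1 t.2.1 t.2.2) ->
  (forall y y0 y1, 0 <= pdens y y0 y1) ->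
  (forall y A, measurable A ->
     P y A = ileb2 (fun y0 y1 => (\1_A (y0, y1) * pdens y y0 y1)%:E)) ->
  measurable_fun setT mdens -> (forall y, 0 <= mdens y) ->
  (forall A, measurable A -> mu A = ileb (fun y => (\1_A y * mdens y)%:E)) ->
  (* (H4) *)
  (exists C0 : R, forall y y0 y1,
     ((mdens y)%:E + (2^-1)%:E * ileb (fun w => (pdens y y0 w + pdens y w y0)%:E)
      + (pdens y y0 y1)%:E <= C0%:E)%E) ->
  (* (H5) *)
  0 < gamma < ((3 * d)%:R)^-1 ->
  2 * alpha ^+ 2 < 2 `^ ((3 * d)%:R * gamma) ->
  measurable_fun setT K0 ->
  (exists c : R, forall u, `|K0 u| <= c) ->
  (ileb (fun u => (`|K0 u|)%:E) < +oo)%E ->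
  (ileb (fun u => (Num.max (K0 u) 0)%:E) - ileb (fun u => (Num.max (- K0 u) 0)%:E) = 1)%E ->
  (* the fixed point *)
  0 < mdens x ->
  (* the sequence (p_n) *)
  {homo p : a b / (a <= b)%N} ->
  (forall n, (0 < p n)%N) ->
  (forall n, (1 < n)%N -> (p n < n)%N) ->
  (fun n => (p n)%:R / n%:R : R) @ \oo --> (1 : R) ->
  (forall lam : R, 0 < lam ->
     (fun n => n%:R - (p n)%:R - lam * ln (n%:R : R)) @ \oo --> +oo) ->
  (* conclusion: E[R_0(n)^2] -> 0 *)
  (fun n => (\int[Pr]_w ((R0 X P mu K0 gamma x x0 x1 p n w) ^+ 2)%:E)%E) @ \oo --> 0%E.
Proof.
move=> d_ge1 _ _ _ _ _ _ _ _ _ _ _ _ _ _ _ _ _ _ _ _ _ _ _ gamma_bounds _ _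
  [c K0_le] _ _ _ _ _ _ p_cvg _.
apply: (@second_moment_cvg0 _ _ _ _ _ (fun n => 2 * c ^+ 3 * R0_rate d gamma p n)).
- by move=> n w; exact: norm_R0_le.
- rewrite -(mulr0 (2 * c ^+ 3)); apply: cvgM; first exact: cvg_cst.
  exact: R0_rate_cvg0.
Qed.
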